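(* Let $n>1$ be an odd perfect square. Then $D_{S(n)^*}=5$.
   Context: For a natural number $n$, $\mathbb Z_n=\mathbb Z/n\mathbb Z$, $S(n)=\{x^2:x\in\mathbb Z_n\}$, $S(n)^*=S(n)\setminus\{0\}$. For $A\subseteq\mathbb Z_n$, a sequence $(y_1,\dots,y_t)$ ($t\ge1$) in $\mathbb Z_n$ is an $A$-weighted zero-sum sequence if there exist $a_1,\dots,a_t\in A$ with $\sum a_iy_i=0$; a sequence has an $A$-weighted zero-sum subsequence if some nonempty subsequence is an $A$-weighted zero-sum sequence. $D_A(n)$ is the least positive integer $t$ such that every sequence of length $t$ in $\mathbb Z_n$ has an $A$-weighted zero-sum subsequence; $D_{S(n)^*}=D_{S(n)^*}(n)$. *)

From mathcomp Require Import all_boot all_algebra.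
Set Implicit Arguments. Unset Strict Implicit. Unset Printing Implicit Defensive.
Import GRing.Theory.
Local Open Scope ring_scope.

(* Z_n = 'Z_n (only used with 1 < n). *)

Definition sqZ (n : nat) : {set 'Z_n} := [set x ^+ 2 | x : 'Z_n].
Definition sqZstar (n : nat) : {set 'Z_n} := sqZ n :\ 0.

Definition weighted_zero_sum (n : nat) (A : {set 'Z_n}) (y : seq 'Z_n) : Prop :=
  (0 < size y)%N /\
  exists a : seq 'Z_n, [/\ size a = size y, all (fun x => x \in A) a &
     \sum_(i < size y) a`_i * y`_i = 0].

Definition has_weighted_zs_subseq (n : nat) (A : {set 'Z_n}) (y : seq 'Z_n) : Prop :=
  exists z : seq 'Z_n, [/\ subseq z y, (0 < size z)%N & weighted_zero_sum A z].

Definition all_seq_have_wzs (n : nat) (A : {set 'Z_n}) (t : nat) : Prop :=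
  forall y : seq 'Z_n, size y = t -> has_weighted_zs_subseq A y.

Definition is_DA (n : nat) (A : {set 'Z_n}) (t : nat) : Prop :=
  [/\ (0 < t)%N, all_seq_have_wzs A t &
      forall t', (0 < t')%N -> (t' < t)%N -> ~ all_seq_have_wzs A t'].

(* Write n = m^2 with m odd.
   Upper bound: fix a prime p | m and k = m / p. Among five terms, three are
   either all prime to p or all divisible by p. Over F_p a diagonal form
   z1 X^2 + z2 Y^2 + z3 always has a zero, and since p is odd a zero with
   p not dividing the last variable lifts from p to p^2; scaling the square
   weights by k^2 then yields a zero sum modulo (p k)^2 = n with a nonzero weight.
   Lower bound: take a with -a a non-square modulo every prime q | m, and r the
   product of these primes. By descent at each q, the form
   X1^2 + a X2^2 + r X3^2 + a r X4^2 vanishes modulo m^2 only when m divides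
   every Xi, so every square weight vanishes in Z_n and (1, a, r, a r), hence
   each of its prefixes, has no S(n)^*-weighted zero-sum subsequence. *)

From mathcomp Require Import all_boot all_algebra.
From mathcomp Require Import zify ring.
Set Implicit Arguments. Unset Strict Implicit. Unset Printing Implicit Defensive.
Import GRing.Theory.

Local Open Scope ring_scope.

Lemma Zp_nat_eq0 (N K : nat) : (1 < N)%N -> ((K%:R : 'Z_N) == 0) = (N %| K)%N.
Proof.
move=> N_gt1; apply/eqP/idP => [/(congr1 val)|dvdNK].
  by rewrite /= val_Zp_nat // => /eqP.
by apply/val_inj; rewrite /= val_Zp_nat //; apply/eqP.
Qed.

Lemma Fp_nat_eq0 (p : nat) : prime p -> forall K, ((K%:R : 'F_p) == 0) = (p %| K)%N.
Proof. by move=> p_pr K; rewrite (dvdn_pcharf (pchar_Fp p_pr)). Qed.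

Section WeightedSums.

Variables (n : nat) (A : {set 'Z_n}).

Definition wsum (a y : seq 'Z_n) := \sum_(i < size y) a`_i * y`_i.

Lemma wsum_nil (a : seq 'Z_n) : wsum a [::] = 0.
Proof. by rewrite /wsum big_ord0. Qed.

Lemma wsum_cons (a0 y0 : 'Z_n) a y : wsum (a0 :: a) (y0 :: y) = a0 * y0 + wsum a y.
Proof. by rewrite /wsum big_ord_recl. Qed.

Lemma wsum_drop_zero_weights (y w : seq 'Z_n) :
  size w = size y -> all (fun x => x \in A) w ->
  exists z a, [/\ subseq z y, size a = size z, all (fun x => x \in A :\ 0) a,
    wsum a z = wsum w y & has (predC1 0) w -> (0 < size z)%N].
Proof.
elim: y w => [|y0 y IHy] [|w0 w] //= => [_ _|[sz_w] /andP [Aw0 Aw]].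
  by exists [::], [::].
have [z [a [sub_zy sz_a Aa wa nz_z]]] := IHy w sz_w Aw.
have [->|w0_nz] := eqVneq w0 0.
  exists z, a; split=> //; last by rewrite wsum_cons mul0r add0r wa.
  exact: subseq_trans sub_zy (subseq_cons y y0).
exists (y0 :: z), (w0 :: a); split=> //=; rewrite ?eqxx ?sz_a //.
  by rewrite !inE w0_nz Aw0.
by rewrite !wsum_cons wa.
Qed.

Lemma wsum_pad_zero_weights (y : seq 'Z_n) (m : bitseq) (a : seq 'Z_n) :
  0 \in A -> size m = size y -> size a = size (mask m y) ->
  all (fun x => x \in A :\ 0) a ->
  exists w, [/\ size w = size y, all (fun x => x \in A) w,
    (0 < size a)%N -> has (predC1 0) w & wsum w y = wsum a (mask m y)].
Proof.
move=> A0; elim: y m a => [|y0 y IHy] [|b m] a //= => [_|[sz_m]].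
  by case: a => // _ _; exists [::].
case: b => /= [|sz_a Aa]; last first.
  have [w [sz_w Aw nz_w wa]] := IHy m a sz_m sz_a Aa.
  by exists (0 :: w); rewrite /= sz_w A0 Aw wsum_cons mul0r add0r wa.
case: a => [|a0 a] //= [sz_a] /andP []; rewrite !inE => /andP [a0_nz Aa0] Aa.
have [w [sz_w Aw _ wa]] := IHy m a sz_m sz_a Aa.
by exists (a0 :: w); split=> //=; rewrite ?sz_w ?Aa0 ?a0_nz ?wsum_cons ?wa.
Qed.

Lemma has_weighted_zs_subseq_setD0P (y : seq 'Z_n) : 0 \in A ->
  has_weighted_zs_subseq (A :\ 0) y <->
  exists w, [/\ size w = size y, all (fun x => x \in A) w,
    has (predC1 0) w & wsum w y = 0].
Proof.
move=> A0; split.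
  case=> _ [/subseqP [m sz_m ->] _ [z_gt0 [a [sz_a Aa a0]]]].
  have [w [sz_w Aw nz_w wa]] := wsum_pad_zero_weights A0 sz_m sz_a Aa.
  by exists w; rewrite wa; split=> //; apply: nz_w; rewrite sz_a.
case=> w [sz_w Aw nz_w w0].
have [z [a [sub_zy sz_a Aa wa z_gt0]]] := wsum_drop_zero_weights sz_w Aw.
have {}z_gt0 := z_gt0 nz_w.
by exists z; split=> //; split=> //; exists a; split=> //; rewrite -/(wsum a z) wa.
Qed.

Lemma has_weighted_zs_subseq_trans (z y : seq 'Z_n) :
  subseq z y -> has_weighted_zs_subseq A z -> has_weighted_zs_subseq A y.
Proof. by move=> sub_zy [u [sub_uz *]]; exists u; split=> //; apply: subseq_trans sub_zy. Qed.

End WeightedSums.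

Lemma sqZ0 n : 0 \in sqZ n.
Proof. by apply/imsetP; exists 0; rewrite ?expr0n. Qed.

Lemma subseq_all_or_none (T : eqType) (P : pred T) (s : seq T) (k : nat) :
  (k.*2 <= (size s).+1)%N ->
  exists z, [/\ subseq z s, size z = k & all P z || all (predC P) z].
Proof.
move=> le_ks; have count_PP' := count_predC P s.
have take_filter Q : (k <= count Q s)%N ->
    [/\ subseq (take k (filter Q s)) s, size (take k (filter Q s)) = k
      & all Q (take k (filter Q s))].
  move=> le_kQ; split; first exact: subseq_trans (take_subseq _ _) (filter_subseq _ _).
    by rewrite size_take size_filter; case: ltngtP le_kQ => //; lia.
  by apply/allP => x /mem_take; rewrite mem_filter => /andP [].
have [/take_filter [sub sz all_P] | lt_P] := leqP k (count P s).
  by eexists; split; [exact: sub | exact: sz | rewrite all_P].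
have [|sub sz all_P'] := take_filter (predC P); first by lia.
by eexists; split; [exact: sub | exact: sz | rewrite all_P' orbT].
Qed.

Lemma finField_nonsquare (F : finFieldType) : (2%:R : F) != 0 ->
  exists b : F, forall x : F, x ^+ 2 != b.
Proof.
move=> two_nz; have sqr_ninj : #|[set x ^+ 2 | x in [set: F]]| != #|[set: F]|.
  apply/negP => /imset_injP /(_ 1 (-1)); rewrite !inE sqrrN => /(_ isT isT erefl) /eqP.
  by rewrite -subr_eq0 opprK -mulr2n (negPf two_nz).
have /subsetPn [b _ b_nsq] : ~~ ([set: F] \subset [set x ^+ 2 | x in [set: F]]).
  by apply: contra sqr_ninj => /subset_leq_card le_F; rewrite eqn_leq le_F leq_imset_card.
by exists b => x; apply: contra b_nsq => /eqP <-; apply/imsetP; exists x.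
Qed.

Section OddPrime.

Variable p : nat.
Hypotheses (p_pr : prime p) (p_odd : odd p).

Lemma Fp_sqr_inj_half (i j : nat) : (i < p.+1 %/ 2)%N -> (j < p.+1 %/ 2)%N ->
  (i%:R ^+ 2 : 'F_p) = j%:R ^+ 2 -> i = j.
Proof.
move=> lt_i lt_j /eqP; rewrite -subr_eq0 subr_sqr mulf_eq0 -natrD (Fp_nat_eq0 p_pr).
case/orP=> [|/dvdn_leq]; last by have := prime_gt1 p_pr; lia.
rewrite subr_eq0 => /eqP /(congr1 val) /=; rewrite !val_Fp_nat // !modn_small //; lia.
Qed.

(* Pigeonhole: the (p + 1) / 2 values z1 i^2 and the (p + 1) / 2 values
   -(z2 j^2 + z3), for 0 <= i, j < (p + 1) / 2, cannot all be distinct in F_p. *)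
Lemma Fp_diag_form_root (z1 z2 z3 : 'F_p) : z1 != 0 -> z2 != 0 ->
  exists X Y : nat, z1 * X%:R ^+ 2 + z2 * Y%:R ^+ 2 + z3 = 0.
Proof.
move=> z1_nz z2_nz; pose h := (p.+1 %/ 2)%N.
pose f (i : 'I_p.+1) := if (i < h)%N then z1 * (i : nat)%:R ^+ 2
                        else - (z2 * (i - h)%:R ^+ 2 + z3).
have /injectivePn [i [j neq_ij]] : ~~ injectiveb f.
  apply/injectiveP => /leq_card; rewrite card_ord card_Fp //; lia.
have lt_i := ltn_ord i; have lt_j := ltn_ord j.
rewrite /f; case: ifP => i_lt; case: ifP => j_lt.
- move/(mulfI z1_nz)/(Fp_sqr_inj_half i_lt j_lt) => eq_ij.
  by case/eqP: neq_ij; apply: val_inj.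
- by move=> e; exists i, (j - h)%N; rewrite e -addrA addNr.
- by move=> e; exists j, (i - h)%N; rewrite -e -addrA addNr.
move/oppr_inj/addIr/(mulfI z2_nz)/Fp_sqr_inj_half => eq_ij.
by case/eqP: neq_ij; apply: val_inj => /=; move: i_lt j_lt eq_ij; rewrite /h; lia.
Qed.

Lemma diag_form_root_mod (z1 z2 z3 : nat) : ~~ (p %| z1)%N -> ~~ (p %| z2)%N ->
  exists X Y : nat, (p %| X ^ 2 * z1 + Y ^ 2 * z2 + z3)%N.
Proof.
rewrite -!(Fp_nat_eq0 p_pr) => z1_nz z2_nz.
have [X [Y XY0]] := Fp_diag_form_root (z3%:R) z1_nz z2_nz.
by exists X, Y; rewrite -(Fp_nat_eq0 p_pr) !natrD !natrM -XY0 -!expr2 ![_ ^+ 2 * _]mulrC.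
Qed.

(* Hensel: since 2 y is invertible mod p, x = 1 + p c lifts the root x = 1 of
   S + x^2 y from p to p^2. *)
Lemma sqr_root_lift_p2 (S y : nat) : ~~ (p %| y)%N -> (p %| S + y)%N ->
  exists x, ~~ (p %| x)%N /\ (p ^ 2 %| S + x ^ 2 * y)%N.
Proof.
move=> p'y /dvdnP [t def_t].
have p_gt1 := prime_gt1 p_pr.
have y2_nz : ((2 * y)%:R : 'F_p) != 0.
  rewrite (Fp_nat_eq0 p_pr) Euclid_dvdM // negb_or p'y andbT.
  by apply: contraL p_odd => /dvdn_leq le_p2; have -> : p = 2%N by lia.
pose c := val (- (t%:R : 'F_p) / (2 * y)%:R).
have /dvdnP [u def_u] : (p %| t + 2 * c * y)%N.
  by rewrite -(Fp_nat_eq0 p_pr) natrD mulnAC natrM /c natr_Zp mulrC divfK // addrN.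
exists (1 + p * c)%N; split; last by apply/dvdnP; exists (u + c ^ 2 * y)%N; nia.
by rewrite dvdn_addl ?dvdn_mulr //; apply/negP => /dvdn_leq; lia.
Qed.

Lemma sqr_weights_dvd_p2 (y1 y2 y3 : nat) :
  [&& ~~ (p %| y1), ~~ (p %| y2) & ~~ (p %| y3)]%N
    || [&& p %| y1, p %| y2 & p %| y3]%N ->
  exists x1 x2 x3, [|| ~~ (p %| x1), ~~ (p %| x2) | ~~ (p %| x3)]%N &&
    (p ^ 2 %| x1 ^ 2 * y1 + x2 ^ 2 * y2 + x3 ^ 2 * y3)%N.
Proof.
have p_gt0 := prime_gt0 p_pr.
have p'1 : ~~ (p %| 1)%N by rewrite dvdn1 neq_ltn prime_gt1 ?orbT.
case/orP=> [/and3P [p'y1 p'y2 p'y3] | /and3P [p_y1 p_y2 p_y3]].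
  have [X [Y /(sqr_root_lift_p2 p'y3) [x3 [p'x3 dvd_p2]]]] :=
    diag_form_root_mod y3 p'y1 p'y2.
  by exists X, Y, x3; rewrite p'x3 !orbT.
have [p2_y1|p2_y1] := boolP (p ^ 2 %| y1)%N.
  by exists 1%N, 0%N, 0%N; rewrite p'1 /= exp1n mul1n !mul0n !addn0.
have [p2_y2|p2_y2] := boolP (p ^ 2 %| y2)%N.
  by exists 0%N, 1%N, 0%N; rewrite p'1 orbT /= exp1n mul1n !mul0n add0n addn0.
(* Otherwise y1 / p and y2 / p are prime to p, and the mod p root of the
   form in the y_i / p scales up to a root mod p^2 of the form in the y_i. *)
have p'div y : (p %| y)%N -> ~~ (p ^ 2 %| y)%N -> ~~ (p %| y %/ p)%N.
  by move=> p_y; apply: contra; rewrite -{2}(divnK p_y) expnSr expn1 dvdn_pmul2r.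
have [X [Y dvd_p]] :=
  diag_form_root_mod (y3 %/ p) (p'div _ p_y1 p2_y1) (p'div _ p_y2 p2_y2).
exists X, Y, 1%N; rewrite p'1 !orbT /=.
rewrite -(divnK p_y1) -(divnK p_y2) -(divnK p_y3) expnSr expn1 exp1n mul1n.
by rewrite !mulnA -!mulnDl dvdn_pmul2r.
Qed.

Section UpperBound.

Variable k : nat.
Hypothesis k_gt0 : (0 < k)%N.
Local Notation n := ((p * k) ^ 2)%N.

Let n_gt1 : (1 < n)%N.
Proof. by have := prime_gt1 p_pr; nia. Qed.

Lemma sqr_scaled_weight_neq0 (x : nat) : ~~ (p %| x)%N ->
  ((k * x)%:R : 'Z_n) ^+ 2 != 0.
Proof.
move=> p'x; rewrite -natrX Zp_nat_eq0 // !expnMn mulnC dvdn_pmul2l ?expn_gt0 ?k_gt0 //.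
apply: contra p'x => /(dvdn_trans (dvdn_exp2l p (isT : (1 <= 2)%N))).
by rewrite expn1 Euclid_dvdX // => /andP [].
Qed.

Lemma has_weighted_zs_subseq3 (a b c : 'Z_n) :
  [&& ~~ (p %| a), ~~ (p %| b) & ~~ (p %| c)]%N || [&& p %| a, p %| b & p %| c]%N ->
  has_weighted_zs_subseq (sqZstar n) [:: a; b; c].
Proof.
case/sqr_weights_dvd_p2 => [x1 [x2 [x3 /andP [p'x dvd_p2]]]].
pose W x : 'Z_n := ((k * x)%:R) ^+ 2.
apply/has_weighted_zs_subseq_setD0P; first exact: sqZ0.
exists [:: W x1; W x2; W x3]; split=> //.
- by rewrite /= !andbT; apply/and3P; split; apply/imsetP; eexists.
- by case/or3P: p'x => /sqr_scaled_weight_neq0 nzW; rewrite /= nzW ?orbT.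
rewrite !wsum_cons wsum_nil addr0 /W.
apply/eqP; rewrite -[a]natr_Zp -[b]natr_Zp -[c]natr_Zp -!natrX -!natrM -!natrD Zp_nat_eq0 //.
have -> : ((k * x1) ^ 2 * a + ((k * x2) ^ 2 * b + (k * x3) ^ 2 * c) =
   k ^ 2 * (x1 ^ 2 * a + x2 ^ 2 * b + x3 ^ 2 * c))%N by ring.
by apply: dvdn_trans (dvdn_mul (dvdnn (k ^ 2)) dvd_p2); rewrite expnMn mulnC.
Qed.

Lemma all_seq_have_wzs5 : all_seq_have_wzs (sqZstar n) 5.
Proof.
move=> y sz_y; pose P (x : 'Z_n) := (p %| x)%N.
have [|z [sub_zy sz_z uniform]] := @subseq_all_or_none _ P y 3; first by rewrite sz_y.
apply: has_weighted_zs_subseq_trans sub_zy _.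
case: z sz_z uniform => [|a [|b [|c []]]] //= _.
by rewrite !andbT orbC => /has_weighted_zs_subseq3.
Qed.

End UpperBound.

End OddPrime.

Definition anisotropic (q a : nat) := [forall x : 'F_q, x ^+ 2 + a%:R != 0].

Section Anisotropic.

Variable q : nat.
Hypothesis q_pr : prime q.

Lemma anisotropic_exists : odd q -> exists a, anisotropic q a.
Proof.
move=> q_odd; have [|b b_nsq] := @finField_nonsquare 'F_q.
  rewrite (Fp_nat_eq0 q_pr); apply: contraL q_odd => /dvdn_leq le_q2.
  by have -> : q = 2%N by have := prime_gt1 q_pr; lia.
by exists (val (- b)); apply/forallP => x; rewrite natr_Zp subr_eq0.
Qed.

Lemma anisotropic_mod a a' : a = a' %[mod q] -> anisotropic q a -> anisotropic q a'.
Proof.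
by move=> eq_aa' /forallP aniso; apply/forallP => x; rewrite -Fp_nat_mod // -eq_aa' Fp_nat_mod.
Qed.

Lemma anisotropic_dvd_sqr_sum a U V : anisotropic q a ->
  (q %| U ^ 2 + a * V ^ 2)%N -> (q %| U)%N /\ (q %| V)%N.
Proof.
rewrite -(Fp_nat_eq0 q_pr) natrD natrM !natrX => /forallP aniso /eqP UV0.
have q_V : (q %| V)%N.
  rewrite -(Fp_nat_eq0 q_pr); apply: contraT => V_nz; case/negP: (aniso (U%:R / V%:R)).
  have -> : (U%:R / V%:R) ^+ 2 + a%:R = (U%:R ^+ 2 + a%:R * V%:R ^+ 2) / V%:R ^+ 2 :> 'F_q.
    by field.
  by rewrite UV0 mul0r.
split=> //; move: UV0; rewrite (eqP (_ : V%:R == 0 :> 'F_q)) ?(Fp_nat_eq0 q_pr) //.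
by rewrite expr0n mulr0 addr0 => /eqP; rewrite expf_eq0 (Fp_nat_eq0 q_pr).
Qed.

Local Close Scope ring_scope.

(* Descent: q | c1 (U^2 + a V^2) forces q | U, V, which moves a factor q^2 out
   of the first summand, so the roles of the two summands swap. *)
Lemma anisotropic_descent a : anisotropic q a -> forall j U V S T c1 c2,
  ~~ (q %| c1) -> ~~ (q %| c2) ->
  q ^ j %| c1 * (U ^ 2 + a * V ^ 2) + q * c2 * (S ^ 2 + a * T ^ 2) ->
  [/\ q ^ (j.+1 %/ 2) %| U, q ^ (j.+1 %/ 2) %| V, q ^ (j %/ 2) %| S & q ^ (j %/ 2) %| T].
Proof.
move=> aniso; elim=> [|j IHj] U V S T c1 c2 q'c1 q'c2 dvd_qj.
  by rewrite !divn_small ?expn0 ?dvd1n.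
have /(anisotropic_dvd_sqr_sum aniso) [q_U q_V] : q %| U ^ 2 + a * V ^ 2.
  have : q %| c1 * (U ^ 2 + a * V ^ 2) + q * c2 * (S ^ 2 + a * T ^ 2).
    by apply: dvdn_trans dvd_qj; rewrite expnS dvdn_mulr.
  rewrite dvdn_addl; last by rewrite -mulnA dvdn_mulr.
  by rewrite Euclid_dvdM // (negPf q'c1).
move: dvd_qj; rewrite -(divnK q_U) -(divnK q_V).
set U' := U %/ q; set V' := V %/ q.
have -> : c1 * ((U' * q) ^ 2 + a * (V' * q) ^ 2) + q * c2 * (S ^ 2 + a * T ^ 2)
   = (c2 * (S ^ 2 + a * T ^ 2) + q * c1 * (U' ^ 2 + a * V' ^ 2)) * q by ring.
rewrite expnSr dvdn_pmul2r ?prime_gt0 // => /(IHj _ _ _ _ _ _ q'c2 q'c1) [q_S q_T q_U' q_V'].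
have -> : j.+2 %/ 2 = (j %/ 2).+1 by rewrite -add2n -{1}(mul1n 2) divnMDl.
by split; rewrite ?expnSr ?dvdn_mul.
Qed.

End Anisotropic.

Section LowerBoundArithmetic.

Local Close Scope ring_scope.

Lemma anisotropic_squarefree_exists (s : seq nat) :
  all prime s -> uniq s -> all odd s ->
  exists a r, [/\ forall q, prime q -> q %| r -> q \in s
    & forall q, q \in s -> [/\ anisotropic q a, q %| r & ~~ (q ^ 2 %| r)]].
Proof.
elim: s => [|q s IHs] /= => [_ _ _|/andP [q_pr s_pr] /andP [q_notin_s s_uniq] /andP [q_odd s_odd]].
  exists 0, 1; split=> // q q_pr; rewrite dvdn1 => /eqP q1.
  by move: q_pr; rewrite q1.
have [a [r [r_s s_r]]] := IHs s_pr s_uniq s_odd.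
have co_qr : coprime q r.
  by rewrite prime_coprime //; apply: contra q_notin_s => /(r_s _ q_pr).
have [a0 aniso_a0] := anisotropic_exists q_pr q_odd.
exists (chinese q r a0 a), (q * r); split.
  move=> q' q'_pr; rewrite Euclid_dvdM // inE.
  by case/orP=> [|/(r_s _ q'_pr) ->]; rewrite ?orbT // dvdn_prime2 // => ->.
move=> q'; rewrite inE => /predU1P [->|q'_s].
  split; last by rewrite expnS expn1 dvdn_pmul2l ?prime_gt0 // -prime_coprime.
    exact: (anisotropic_mod q_pr (esym (chinese_modl co_qr a0 a)) aniso_a0).
  exact: dvdn_mulr.
have q'_pr : prime q' by move/allP: s_pr; apply.
have [aniso_a q'_r q'2_r] := s_r q' q'_s.
split; last 1 first.
- rewrite Gauss_dvdr // coprimeXl // prime_coprime // dvdn_prime2 //.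
  by apply: contra q_notin_s => /eqP <-.
- have eq_a : a = chinese q r a0 a %[mod q'].
    by rewrite -(modn_dvdm a q'_r) -(chinese_modr co_qr a0) modn_dvdm.
  exact: (anisotropic_mod q'_pr eq_a aniso_a).
exact: dvdn_mull.
Qed.

Lemma quaternary_form_dvd (m a r X1 X2 X3 X4 : nat) : 0 < m ->
  (forall q, prime q -> q %| m -> [/\ anisotropic q a, q %| r & ~~ (q ^ 2 %| r)]) ->
  m ^ 2 %| X1 ^ 2 + X2 ^ 2 * a + X3 ^ 2 * r + X4 ^ 2 * (a * r) ->
  [/\ m %| X1, m %| X2, m %| X3 & m %| X4].
Proof.
move=> m_gt0 m_ar dvd_m2.
suff m_q q : q \in \pi(m) -> [/\ m`_q %| X1, m`_q %| X2, m`_q %| X3 & m`_q %| X4].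
  by split; apply/dvdn_partP => // q /m_q [].
rewrite mem_primes => /and3P [q_pr _ q_m]; have [aniso q_r q2_r] := m_ar q q_pr q_m.
have q'r : ~~ (q %| r %/ q).
  by apply: contra q2_r; rewrite -{2}(divnK q_r) expnSr expn1 dvdn_pmul2r ?prime_gt0.
have q'1 : ~~ (q %| 1) by rewrite dvdn1 neq_ltn prime_gt1 ?orbT.
rewrite p_part; set e := logn q m.
have dvd_q2e : q ^ (e * 2) %| 1 * (X1 ^ 2 + a * X2 ^ 2) + q * (r %/ q) * (X3 ^ 2 + a * X4 ^ 2).
  have -> : 1 * (X1 ^ 2 + a * X2 ^ 2) + q * (r %/ q) * (X3 ^ 2 + a * X4 ^ 2)
     = X1 ^ 2 + X2 ^ 2 * a + X3 ^ 2 * (r %/ q * q) + X4 ^ 2 * (a * (r %/ q * q)) by ring.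
  rewrite divnK //; apply: dvdn_trans dvd_m2.
  by rewrite expnM dvdn_exp2r // -p_part dvdn_part.
have := anisotropic_descent q_pr aniso q'1 q'r dvd_q2e.
by rewrite mulnK // -addn1 divnMDl // divn_small ?addn0.
Qed.

End LowerBoundArithmetic.

Section LowerBound.

Variable m : nat.
Hypotheses (m_gt1 : (1 < m)%N) (m_odd : odd m).
Local Notation n := (m ^ 2)%N.

Let n_gt1 : (1 < n)%N.
Proof. by rewrite (ltn_sqr 1). Qed.

Lemma quaternary_seq_no_weighted_zs (a r : nat) :
  (forall q, prime q -> (q %| m)%N -> [/\ anisotropic q a, (q %| r)%N & ~~ (q ^ 2 %| r)%N]) ->
  ~ has_weighted_zs_subseq (sqZstar n) [:: 1; a%:R; r%:R; (a * r)%:R].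
Proof.
move=> m_ar /has_weighted_zs_subseq_setD0P [|w [sz_w sq_w nz_w w0]]; first exact: sqZ0.
case: w sz_w sq_w nz_w w0 => [|w1 [|w2 [|w3 [|w4 []]]]] //= _.
rewrite !andbT => /and4P [/imsetP [x1 _ ->] /imsetP [x2 _ ->] /imsetP [x3 _ ->] /imsetP [x4 _ ->]].
rewrite !wsum_cons wsum_nil addr0 -[x1]natr_Zp -[x2]natr_Zp -[x3]natr_Zp -[x4]natr_Zp.
rewrite mulr1 -!natrX -!natrM -!natrD => nz_x /eqP; rewrite Zp_nat_eq0 // !addnA.
case/(quaternary_form_dvd (ltnW m_gt1) m_ar) => m_x1 m_x2 m_x3 m_x4.
by move: nz_x; rewrite !Zp_nat_eq0 // !dvdn_exp2r // m_x1 m_x2 m_x3 m_x4.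
Qed.

Lemma not_all_seq_have_wzs_lt5 (t : nat) : (0 < t)%N -> (t < 5)%N ->
  ~ all_seq_have_wzs (sqZstar n) t.
Proof.
move=> t_gt0 t_lt5 all_wzs.
have [|||a [r [_ s_ar]]] := @anisotropic_squarefree_exists (primes m).
- by apply/allP => q; rewrite mem_primes => /andP [].
- exact: primes_uniq.
- by apply/allP => q; rewrite mem_primes => /and3P [_ _ /dvdn_odd ->].
apply: (@quaternary_seq_no_weighted_zs a r).
  by move=> q q_pr q_m; apply: s_ar; rewrite mem_primes q_pr q_m ltnW.
apply: has_weighted_zs_subseq_trans (take_subseq _ t) (all_wzs _ _).
by rewrite size_take /=; case: ltnP => //; lia.
Qed.

End LowerBound.

Theorem mainTheorem15 (n : nat) :
  (1 < n)%N -> odd n -> (exists m : nat, n = (m ^ 2)%N) ->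
  is_DA (sqZstar n) 5.
Proof.
move=> n_gt1 n_odd [m def_n]; subst n.
have m_odd : odd m by rewrite oddX in n_odd.
have m_gt1 : (1 < m)%N by rewrite -(ltn_sqr 1).
split=> //; last exact: not_all_seq_have_wzs_lt5.
have p_pr := pdiv_prime m_gt1; have p_m := pdiv_dvd m.
rewrite -(divnK p_m) mulnC.
apply: (all_seq_have_wzs5 p_pr (dvdn_odd p_m m_odd)).
by rewrite divn_gt0 ?prime_gt0 // dvdn_leq // ltnW.
Qed.
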